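(* The elements $\{xC_ny\}_{n\in\mathbb N}$ (free products) mutually commute with respect to the $q$-shuffle product $\star$.
   Context: $\mathbb F$ is a field of characteristic zero and $q\in\mathbb F$ is nonzero and not a root of unity; $[n]_q=(q^n-q^{-n})/(q-q^{-1})$. $\mathbb V$ is the free algebra on noncommuting letters $x,y$; a word is a product of letters (the empty word is $1$), and words form a basis. The $q$-shuffle product $\star$ on $\mathbb V$ is the bilinear product with $1\star v=v\star 1=v$ and, for nontrivial words $u=u_1\cdots u_r$, $v=v_1\cdots v_s$ (letters $u_i,v_j$), $u\star v=u_1\bigl((u_2\cdots u_r)\star v\bigr)+v_1\bigl(u\star(v_2\cdots v_s)\bigr)q^{(u_1,v_1)+(u_2,v_1)+\cdots+(u_r,v_1)}$, where juxtaposition is concatenation and $(x,x)=(y,y)=2$, $(x,y)=(y,x)=-2$. Set $\overline x=1$, $\overline y=-1$. A word $u_1\cdots u_n$ is Catalan if $\overline u_1+\cdots+\overline u_i\ge0$ for $1\le i\le n-1$ and $=0$ for $i=n$. For $n\in\mathbb N$, $C_n=\sum u_1u_2\cdots u_{2n}\,[1]_q[1+\overline u_1]_q[1+\overline u_1+\overline u_2]_q\cdots[1+\overline u_1+\cdots+\overline u_{2n}]_q$, summed over all Catalan words of length $2n$ (so $C_0=1$). *)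

From HB Require Import structures.
From mathcomp Require Import all_boot all_order all_algebra.
Set Implicit Arguments. Unset Strict Implicit. Unset Printing Implicit Defensive.
Import Order.TTheory GRing.Theory Num.Theory.
Local Open Scope ring_scope.

Definition letter := bool.
Definition lx : letter := true.
Definition ly : letter := false.
Definition word := seq letter.

(* The free algebra V on x, y, represented as formal finite linear
   combinations of words (lists of (coefficient, word) pairs); two such
   representations denote the same vector iff all word-coefficients agree. *)
Definition vec (F : fieldType) := seq (F * word).

Definition coef (F : fieldType) (v : vec F) (w : word) : F :=
  \sum_(p <- v | p.2 == w) p.1.

Definition veq (F : fieldType) (a b : vec F) : Prop := forall w, coef a w = coef b w.

Definition pairing (a b : letter) : int := if a == b then (2 : int) else (-2 : int).

Definition lbar (a : letter) : int := if a then (1 : int) else (-1 : int).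

Definition qint (F : fieldType) (q : F) (n : int) : F :=
  (q ^ n - q ^ (- n)) / (q - q^-1).

Definition scalev (F : fieldType) (c : F) (v : vec F) : vec F :=
  [seq (c * p.1, p.2) | p <- v].

Definition prependv (F : fieldType) (a : letter) (v : vec F) : vec F :=
  [seq (p.1, a :: p.2) | p <- v].

(* q-shuffle of two words, following the recursive definition:
   u * v = u1 ((u2..ur) * v) + v1 (u * (v2..vs)) q^{(u1,v1)+...+(ur,v1)}. *)
Fixpoint qshw (F : fieldType) (q : F) (u : word) : word -> vec F :=
  match u with
  | [::] => fun v => [:: (1, v)]
  | a :: u' =>
      fix g (v : word) : vec F :=
        match v with
        | [::] => [:: (1, a :: u')]
        | b :: v' =>
            prependv a (qshw q u' v) ++
            scalev (q ^ (\sum_(c <- a :: u') pairing c b)) (prependv b (g v'))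
        end
  end.

Definition qshuffle (F : fieldType) (q : F) (A B : vec F) : vec F :=
  flatten [seq [seq (a.1 * b.1 * c.1, c.2) | c <- qshw q a.2 b.2]
          | a <- A, b <- B].

Fixpoint allwords (n : nat) : seq word :=
  match n with
  | 0 => [:: [::]]
  | n'.+1 => [seq a :: w | a <- [:: lx; ly], w <- allwords n']
  end.

Definition psum (w : word) (i : nat) : int := \sum_(a <- take i w) lbar a.

Definition catalan (w : word) : bool :=
  [forall i : 'I_(size w), (0 < i)%N ==> (0 <= psum w i)] && (psum w (size w) == 0).

Definition Ccat (F : fieldType) (q : F) (n : nat) : vec F :=
  [seq (\prod_(i < (2 * n).+1) qint q (1 + psum w i), w)
  | w <- allwords (2 * n) & catalan w].

Definition xCy (F : fieldType) (q : F) (n : nat) : vec F :=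
  [seq (p.1, lx :: p.2 ++ [:: ly]) | p <- Ccat q n].

From HB Require Import structures.
From mathcomp Require Import all_boot all_order all_algebra.
From mathcomp Require Import ring zify.
From Stdlib Require Import FunctionalExtensionality.
Import Order.TTheory GRing.Theory Num.Theory.
Set Implicit Arguments. Unset Strict Implicit. Unset Printing Implicit Defensive.
Local Open Scope ring_scope.

(* Pass from polynomials to coefficient series word -> F: there the q-shuffle
   is an associative product characterised by a twisted Leibniz rule for left
   derivatives.  Let A_N be the part of the series sum_n x C_n y with N letters
   y (so A_N = x C_(N-1) y) and G_k = (xy)^k.  The alternating words G_k
   mutually commute, and the A_N satisfy the Newton-type identity
     sum_(i <= N) (-1)^(i+1) [i]_q A_i * G_(N-i) = N G_N,
   proved by exhibiting a family of series that is closed under left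
   derivatives, vanishes at the empty word, and contains the defect of the
   identity.  As q is not a root of unity, (-1)^(N+1) [N]_q is invertible,
   so A_N is a polynomial in the G_k and the A_i with i < N; by strong
   induction the A_N commute with the G_k, and then with each other. *)

(** * The q-shuffle product of coefficient series *)

Section QShuffleSeries.
Variables (F : fieldType) (q : F).
Hypothesis q_neq0 : q != 0.

Definition series : Type := word -> F.

Definition sword (u : word) : series := fun w => (w == u)%:R.

Definition lder (a : letter) (f : series) : series := fun w => f (a :: w).

Definition wpairing (u : word) (a : letter) : int := \sum_(c <- u) pairing c a.

Definition twist (a : letter) (f : series) : series :=
  fun u => q ^ wpairing u a * f u.

(* The recursive definition of the q-shuffle, read on coefficients: the first
   letter a of a word comes either from f, or from g with the twist q^(u,a). *)
Fixpoint qsh (f g : series) (w : word) : F :=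
  match w with
  | [::] => f [::] * g [::]
  | a :: w' => qsh (lder a f) g w' + qsh (twist a f) (lder a g) w'
  end.

Lemma lder_qsh a f g :
  lder a (qsh f g) = qsh (lder a f) g \+ qsh (twist a f) (lder a g).
Proof. by []. Qed.

Lemma qsh_cons f g a w :
  qsh f g (a :: w) = qsh (lder a f) g w + qsh (twist a f) (lder a g) w.
Proof. by []. Qed.

Lemma wpairing_nil a : wpairing [::] a = 0.
Proof. by rewrite /wpairing big_nil. Qed.

Lemma wpairing_cons c u a : wpairing (c :: u) a = pairing c a + wpairing u a.
Proof. by rewrite /wpairing big_cons. Qed.

Lemma twistD a f g : twist a (f \+ g) = twist a f \+ twist a g.
Proof. by apply: functional_extensionality => u; rewrite /twist /= mulrDr. Qed.

Lemma twistZ a c f : twist a (c \*o f) = c \*o twist a f.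
Proof. by apply: functional_extensionality => u; rewrite /twist /= mulrCA. Qed.

Lemma twist0 a : twist a \0 = \0.
Proof. by apply: functional_extensionality => u; rewrite /twist /= mulr0. Qed.

Lemma qshDl f1 f2 g w : qsh (f1 \+ f2) g w = qsh f1 g w + qsh f2 g w.
Proof.
elim: w f1 f2 g => [|a w IH] f1 f2 g /=; first by rewrite mulrDl.
by rewrite twistD !IH addrACA.
Qed.

Lemma qshDr f g1 g2 w : qsh f (g1 \+ g2) w = qsh f g1 w + qsh f g2 w.
Proof.
elim: w f g1 g2 => [|a w IH] f g1 g2 /=; first by rewrite mulrDr.
by rewrite !IH addrACA.
Qed.

Lemma qshZl c f g w : qsh (c \*o f) g w = c * qsh f g w.
Proof.
elim: w f g => [|a w IH] f g /=; first by rewrite mulrA.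
by rewrite twistZ !IH mulrDr.
Qed.

Lemma qshZr c f g w : qsh f (c \*o g) w = c * qsh f g w.
Proof.
elim: w f g => [|a w IH] f g /=; first by rewrite mulrCA.
by rewrite !IH mulrDr.
Qed.

Lemma qsh0l g w : qsh \0 g w = 0.
Proof.
elim: w g => [|a w IH] g /=; first by rewrite mul0r.
by rewrite twist0 !IH addr0.
Qed.

Lemma qsh0r f w : qsh f \0 w = 0.
Proof.
elim: w f => [|a w IH] f /=; first by rewrite mulr0.
by rewrite !IH addr0.
Qed.

Lemma lder_sword_nil a : lder a (sword [::]) = \0.
Proof. by []. Qed.

Lemma twist_sword a u : twist a (sword u) = q ^ wpairing u a \*o sword u.
Proof.
apply: functional_extensionality => w; rewrite /twist /sword /=.
by case: eqP => [->|]; rewrite ?mulr0.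
Qed.

Lemma qsh1l g w : qsh (sword [::]) g w = g w.
Proof.
elim: w g => [|a w IH] g /=; first by rewrite mul1r.
rewrite lder_sword_nil qsh0l add0r twist_sword wpairing_nil expr0z.
by rewrite qshZl mul1r IH.
Qed.

Lemma qsh1r f w : qsh f (sword [::]) w = f w.
Proof.
elim: w f => [|a w IH] f /=; first by rewrite mulr1.
by rewrite lder_sword_nil qsh0r addr0 IH.
Qed.

Lemma lder_twist a b f :
  lder b (twist a f) = q ^ pairing b a \*o twist a (lder b f).
Proof.
apply: functional_extensionality => u.
by rewrite /lder /twist /= wpairing_cons expfzDr // mulrA.
Qed.

Lemma twistC a b f : twist a (twist b f) = twist b (twist a f).
Proof. by apply: functional_extensionality => u; rewrite /twist mulrCA. Qed.

Lemma twist_qsh a f g : twist a (qsh f g) = qsh (twist a f) (twist a g).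
Proof.
apply: functional_extensionality => w; rewrite /twist.
elim: w f g => [|b w IH] f g /=; first by rewrite wpairing_nil expr0z !mul1r.
rewrite wpairing_cons expfzDr // -mulrA mulrDr !IH !lder_twist qshZl qshZr.
by rewrite twistC mulrDr.
Qed.

Lemma qshA f g h w : qsh (qsh f g) h w = qsh f (qsh g h) w.
Proof.
elim: w f g h => [|a w IH] f g h /=; first by rewrite mulrA.
by rewrite !lder_qsh twist_qsh qshDl qshDr !IH addrA.
Qed.

Lemma qsh_suml (I : Type) (r : seq I) (c : I -> F) (f : I -> series) g w :
  qsh (fun u => \sum_(i <- r) c i * f i u) g w = \sum_(i <- r) c i * qsh (f i) g w.
Proof.
elim: r => [|i r IH].
  have -> : (fun u => \sum_(i <- [::]) c i * f i u) = \0.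
    by apply: functional_extensionality => u; rewrite big_nil.
  by rewrite qsh0l big_nil.
rewrite big_cons -IH -qshZl -qshDl; congr (qsh _ g w).
by apply: functional_extensionality => u; rewrite big_cons.
Qed.

Lemma qsh_sumr (I : Type) (r : seq I) (c : I -> F) (g : I -> series) f w :
  qsh f (fun u => \sum_(i <- r) c i * g i u) w = \sum_(i <- r) c i * qsh f (g i) w.
Proof.
elim: r => [|i r IH].
  have -> : (fun u => \sum_(i <- [::]) c i * g i u) = \0.
    by apply: functional_extensionality => u; rewrite big_nil.
  by rewrite qsh0r big_nil.
rewrite big_cons -IH -qshZr -qshDr; congr (qsh f _ w).
by apply: functional_extensionality => u; rewrite big_cons.
Qed.

Definition qcommute (f g : series) : Prop := forall w, qsh f g w = qsh g f w.

Lemma qcommute_sym f g : qcommute f g -> qcommute g f.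
Proof. by move=> fg w; rewrite fg. Qed.

Lemma qcommute0 f : qcommute f \0.
Proof. by move=> w; rewrite qsh0l qsh0r. Qed.

Lemma qcommuteD f g1 g2 : qcommute f g1 -> qcommute f g2 -> qcommute f (g1 \+ g2).
Proof. by move=> fg1 fg2 w; rewrite qshDl qshDr fg1 fg2. Qed.

Lemma qcommuteZ f c g : qcommute f g -> qcommute f (c \*o g).
Proof. by move=> fg w; rewrite qshZl qshZr fg. Qed.

Lemma qcommute_sum f (I : Type) (r : seq I) (c : I -> F) (g : I -> series) :
  (forall i, qcommute f (g i)) -> qcommute f (fun w => \sum_(i <- r) c i * g i w).
Proof. by move=> fg w; rewrite qsh_suml qsh_sumr; apply: eq_bigr => i _; rewrite fg. Qed.

Lemma qcommute_qsh f g1 g2 : qcommute f g1 -> qcommute f g2 -> qcommute f (qsh g1 g2).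
Proof.
move=> fg1 fg2 w.
have e1 : qsh f g1 = qsh g1 f by apply: functional_extensionality.
have e2 : qsh f g2 = qsh g2 f by apply: functional_extensionality.
by rewrite -qshA e1 qshA e2 -qshA.
Qed.

Lemma coef_cat (v1 v2 : vec F) w : coef (v1 ++ v2) w = coef v1 w + coef v2 w.
Proof. by rewrite /coef big_cat. Qed.

Lemma coef_sword (v : vec F) w : coef v w = \sum_(p <- v) p.1 * sword p.2 w.
Proof.
rewrite /coef big_mkcond; apply: eq_bigr => p _; rewrite /sword eq_sym.
by case: eqP; rewrite ?mulr1 ?mulr0.
Qed.

Lemma coef_scalev c (v : vec F) w : coef (scalev c v) w = c * coef v w.
Proof. by rewrite !coef_sword big_map mulr_sumr; apply: eq_bigr => p _; rewrite mulrA. Qed.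

Lemma coef_prependv_nil a (v : vec F) : coef (prependv a v) [::] = 0.
Proof. by rewrite coef_sword big_map big1 // => p _; rewrite /sword mulr0. Qed.

Lemma coef_prependv_cons a (v : vec F) b w :
  coef (prependv a v) (b :: w) = (a == b)%:R * coef v w.
Proof.
rewrite !coef_sword big_map mulr_sumr; apply: eq_bigr => p _.
by rewrite /sword /= eqseq_cons eq_sym; case: (a == b); rewrite ?mul1r ?mul0r ?mulr0.
Qed.

Lemma coef_single u w : coef [:: (1, u)] w = sword u w.
Proof. by rewrite coef_sword big_seq1 mul1r. Qed.

Lemma lder_sword_cons a c u : lder a (sword (c :: u)) = (c == a)%:R \*o sword u.
Proof.
apply: functional_extensionality => w; rewrite /lder /sword /= eqseq_cons eq_sym.
by case: (c == a); rewrite ?mul1r ?mul0r.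
Qed.

Lemma qshw_cons u b v a :
  qshw q (a :: u) (b :: v) =
  prependv a (qshw q u (b :: v)) ++
  scalev (q ^ wpairing (a :: u) b) (prependv b (qshw q (a :: u) v)).
Proof. by []. Qed.

Lemma coef_qshw u v w : coef (qshw q u v) w = qsh (sword u) (sword v) w.
Proof.
elim: w u v => [|a w IH] [|c u] v; try by rewrite coef_single qsh1l.
- case: v => [|b v]; first by rewrite coef_single qsh1r.
  rewrite qshw_cons coef_cat coef_scalev !coef_prependv_nil mulr0 addr0.
  by rewrite /= /sword mul0r.
- case: v => [|b v]; first by rewrite coef_single qsh1r.
  rewrite qshw_cons coef_cat coef_scalev !coef_prependv_cons !IH qsh_cons.
  rewrite !lder_sword_cons twist_sword qshZl !qshZr qshZl.
  by case: (eqVneq b a) => [->|_]; [rewrite mulrCA | rewrite !mul0r mulr0].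
Qed.

Lemma coef_qshuffle (A B : vec F) w :
  coef (qshuffle q A B) w = qsh (coef A) (coef B) w.
Proof.
have coefE (v : vec F) : coef v = fun u => \sum_(p <- v) p.1 * sword p.2 u.
  by apply: functional_extensionality => u; rewrite coef_sword.
rewrite (coefE A) (coefE B) qsh_suml /qshuffle /coef !big_flatten /= big_map.
apply: eq_bigr => p _; rewrite qsh_sumr (big_map _ xpredT) mulr_sumr.
apply: eq_bigr => p' _; rewrite -coef_qshw /coef big_map /=.
by rewrite !mulr_sumr; apply: eq_bigr => c _; rewrite mulrA.
Qed.

(** * Weighted path series and Newton's identity *)

Hypothesis q2_neq1 : q ^+ 2 != 1.

Local Notation qn n := (qint q (Posz n)).

Lemma qint_den_neq0 : q - q^-1 != 0.
Proof.
apply: contraNneq q2_neq1 => /eqP; rewrite subr_eq0 => /eqP e.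
by rewrite expr2 {2}e mulfV.
Qed.

Lemma qsqr_sub1_neq0 : q * q - 1 != 0.
Proof. by rewrite subr_eq0 -expr2. Qed.

Lemma qintE n : qn n = (q ^+ n - (q ^+ n)^-1) / (q - q^-1).
Proof. by rewrite /qint -exprnN. Qed.

Lemma qint0 : qn 0 = 0.
Proof. by rewrite qintE expr0 invr1 subrr mul0r. Qed.

Lemma qint1 : qn 1 = 1.
Proof. by rewrite qintE expr1 divff // qint_den_neq0. Qed.

Lemma qintSS n : qn n.+2 = qn 2 * qn n.+1 - qn n.
Proof.
have qn_neq0 : q ^+ n != 0 by rewrite expf_neq0.
rewrite !qintE !exprS.
by field; rewrite q_neq0 qsqr_sub1_neq0 qn_neq0.
Qed.

Definition nx (w : word) : nat := count id w.
Definition ny (w : word) : nat := count negb w.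

Lemma size_word w : size w = (nx w + ny w)%N.
Proof. by rewrite /nx /ny -(count_predC id). Qed.

Lemma wpairing_x u : wpairing u lx = 2 * (nx u)%:Z - 2 * (ny u)%:Z.
Proof.
elim: u => [|c u IH]; first by rewrite wpairing_nil.
by rewrite wpairing_cons IH /nx /ny; case: c => /=; rewrite /pairing /=; lia.
Qed.

Lemma wpairing_y u : wpairing u ly = 2 * (ny u)%:Z - 2 * (nx u)%:Z.
Proof.
elim: u => [|c u IH]; first by rewrite wpairing_nil.
by rewrite wpairing_cons IH /nx /ny; case: c => /=; rewrite /pairing /=; lia.
Qed.

Lemma twist_homog a f (k : int) :
  (forall u, f u != 0 -> wpairing u a = k) -> twist a f = q ^ k \*o f.
Proof.
move=> hf; apply: functional_extensionality => u; rewrite /twist /=.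
by have [->|/hf ->] := eqVneq (f u) 0; rewrite ?mulr0.
Qed.

Lemma twist_balanced a f :
  (forall u, f u != 0 -> nx u = ny u) -> twist a f = f.
Proof.
move=> hf; rewrite (@twist_homog a f 0) //.
  by apply: functional_extensionality => u; rewrite /= expr0z mul1r.
by move=> u /hf e; case: a; rewrite ?wpairing_x ?wpairing_y e subrr.
Qed.

(* Paths from height [h] down to 0 (x up, y down), each step weighted by
   [current height]_q; since [0]_q = 0, only paths reaching 0 at their very end
   survive, so the truncation of [h.-1] never matters. *)
Fixpoint ballot (h : nat) (w : word) : F :=
  match w with
  | [::] => (h == 0)%:R
  | c :: w' => qn h * ballot (if c then h.+1 else h.-1) w'
  end.

Lemma ballot_ny h u : ballot h u != 0 -> (nx u + h = ny u)%N.
Proof.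
elim: u h => [|c u IH] h /=; first by case: h => [|h] //=; rewrite eqxx.
case: h => [|h]; first by rewrite qint0 mul0r eqxx.
move=> hne; have /IH : ballot (if c then h.+2 else h) u != 0.
  by apply: contraNneq hne => ->; rewrite mulr0.
by rewrite /nx /ny; case: c {hne} => /=; lia.
Qed.

Lemma twist_ballot_x h : twist lx (ballot h) = (q ^+ h ^+ 2)^-1 \*o ballot h.
Proof.
rewrite (@twist_homog _ _ (- (2 * h)%:Z)); last first.
  by move=> u /ballot_ny e; rewrite wpairing_x -e PoszD mulrDr; lia.
by rewrite -exprnN -exprM mulnC.
Qed.

Lemma twist_ballot_y h : twist ly (ballot h) = q ^+ h ^+ 2 \*o ballot h.
Proof.
rewrite (@twist_homog _ _ (2 * h)%:Z); last first.
  by move=> u /ballot_ny e; rewrite wpairing_y -e PoszD mulrDr; lia.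
by rewrite -exprM mulnC.
Qed.

Lemma ballot0 : ballot 0 = sword [::].
Proof. by apply: functional_extensionality => -[|c u] //=; rewrite qint0 mul0r. Qed.

(* The series sum_n x C_n y, see [coef_xCy]. *)
Definition xCy_series (w : word) : F := if w is true :: w' then ballot 1 w' else 0.

Lemma xCy_series_balanced u : xCy_series u != 0 -> nx u = ny u.
Proof.
case: u => [|[] u] /=; rewrite ?eqxx //.
by move/ballot_ny; rewrite /nx /ny /=; lia.
Qed.

Lemma twist_xCy_series a : twist a xCy_series = xCy_series.
Proof. exact/twist_balanced/xCy_series_balanced. Qed.

(* [alt true] is the sum of the words (xy)^k, [alt false] that of the y(xy)^k. *)
Fixpoint alt (b : bool) (w : word) : F :=
  match w with
  | [::] => b%:R
  | c :: w' => if c == b then alt (~~ b) w' else 0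
  end.

Local Notation altx := (alt true).
Local Notation alty := (alt false).

Lemma alt_ny b u : alt b u != 0 -> (nx u + ~~ b = ny u)%N.
Proof.
elim: u b => [|c u IH] b /=; first by case: b; rewrite ?eqxx.
case: (eqVneq c b) => [<- /IH|_]; last by rewrite eqxx.
by rewrite /nx /ny; case: c => /=; lia.
Qed.

Lemma twist_altx a : twist a altx = altx.
Proof. by apply: twist_balanced => u /alt_ny; rewrite addn0. Qed.

Lemma twist_alty_x : twist lx alty = (q ^+ 2)^-1 \*o alty.
Proof.
rewrite exprnN (@twist_homog _ _ (-2)) //.
by move=> u /alt_ny /= e; rewrite wpairing_x -e PoszD; lia.
Qed.

Lemma twist_alty_y : twist ly alty = q ^+ 2 \*o alty.
Proof.
rewrite (@twist_homog _ _ 2) //.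
by move=> u /alt_ny /= e; rewrite wpairing_y -e PoszD; lia.
Qed.

Definition yweight (f : series) : series := fun w => (ny w)%:R * f w.

Lemma lder_yweight_y f : lder ly (yweight f) = yweight (lder ly f) \+ lder ly f.
Proof.
apply: functional_extensionality => u; rewrite /lder /yweight /ny /=.
by rewrite add1n -addn1 natrD mulrDl mul1r.
Qed.

Definition newton_coef (N : nat) : F := (-1) ^+ N.+1 * qn N.

Definition nweight (k : nat) (f : series) : series :=
  fun w => newton_coef (ny w + k) * f w.

Lemma lder_nweight_x k f : lder lx (nweight k f) = nweight k (lder lx f).
Proof. by []. Qed.

Lemma lder_nweight_y k f : lder ly (nweight k f) = nweight k.+1 (lder ly f).
Proof.
by apply: functional_extensionality => u; rewrite /lder /nweight /ny /= add1n addSn addnS.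
Qed.

Lemma twist_nweight a k f : twist a (nweight k f) = nweight k (twist a f).
Proof. by apply: functional_extensionality => u; rewrite /twist /nweight mulrCA. Qed.

Lemma nweightZ k c f : nweight k (c \*o f) = c \*o nweight k f.
Proof. by apply: functional_extensionality => u; rewrite /nweight /= mulrCA. Qed.

Lemma nweight0 k : nweight k \0 = \0.
Proof. by apply: functional_extensionality => u; rewrite /nweight /= mulr0. Qed.

Lemma nweightSS k f :
  nweight k.+2 f = - qn 2 \*o nweight k.+1 f \+ -1 \*o nweight k f.
Proof.
apply: functional_extensionality => u; rewrite /nweight /newton_coef /=.
by rewrite !addnS qintSS !exprS; ring.
Qed.

Lemma nweight_sword_nil k : nweight k (sword [::]) = newton_coef k \*o sword [::].
Proof.
by apply: functional_extensionality => -[|c u]; rewrite /nweight /sword /= ?mulr0.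
Qed.

Lemma newton_coef0 : newton_coef 0 = 0.
Proof. by rewrite /newton_coef qint0 mulr0. Qed.

Lemma newton_coef1 : newton_coef 1 = 1.
Proof. by rewrite /newton_coef qint1 mulr1 expr2 mulrNN mulr1. Qed.

Lemma lder_ballot_x h : lder lx (ballot h) = qn h \*o ballot h.+1.
Proof. by []. Qed.

Lemma lder_ballot_y h : lder ly (ballot h) = qn h \*o ballot h.-1.
Proof. by []. Qed.

Lemma lder_altx_y : lder ly altx = \0. Proof. by []. Qed.
Lemma lder_alty_x : lder lx alty = \0. Proof. by []. Qed.
Lemma lder_alty_y : lder ly alty = altx. Proof. by []. Qed.

Definition ballot_qsh (k h : nat) (g : series) : series := qsh (nweight k (ballot h)) g.

Lemma ballot_qsh_x k h g w :
  ballot_qsh k h g (lx :: w) =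
  qn h * ballot_qsh k h.+1 g w + (q ^+ h ^+ 2)^-1 * ballot_qsh k h (lder lx g) w.
Proof.
rewrite /ballot_qsh qsh_cons lder_nweight_x lder_ballot_x nweightZ qshZl.
by rewrite twist_nweight twist_ballot_x nweightZ qshZl.
Qed.

Lemma ballot_qsh_y k h g w :
  ballot_qsh k h g (ly :: w) =
  qn h * ballot_qsh k.+1 h.-1 g w + q ^+ h ^+ 2 * ballot_qsh k h (lder ly g) w.
Proof.
rewrite /ballot_qsh qsh_cons lder_nweight_y lder_ballot_y nweightZ qshZl.
by rewrite twist_nweight twist_ballot_y nweightZ qshZl.
Qed.

Lemma ballot_qsh_altx_x k h w :
  ballot_qsh k h altx (lx :: w) =
  qn h * ballot_qsh k h.+1 altx w + (q ^+ h ^+ 2)^-1 * ballot_qsh k h alty w.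
Proof. by rewrite ballot_qsh_x. Qed.

Lemma ballot_qsh_alty_x k h w :
  ballot_qsh k h alty (lx :: w) = qn h * ballot_qsh k h.+1 alty w.
Proof. by rewrite ballot_qsh_x lder_alty_x /ballot_qsh qsh0r mulr0 addr0. Qed.

Lemma ballot_qsh_altx_y k h w :
  ballot_qsh k h altx (ly :: w) = qn h * ballot_qsh k.+1 h.-1 altx w.
Proof. by rewrite ballot_qsh_y lder_altx_y /ballot_qsh qsh0r mulr0 addr0. Qed.

Lemma ballot_qsh_alty_y k h w :
  ballot_qsh k h alty (ly :: w) =
  qn h * ballot_qsh k.+1 h.-1 alty w + q ^+ h ^+ 2 * ballot_qsh k h altx w.
Proof. by rewrite ballot_qsh_y. Qed.

Lemma ballot_qshSS h g w :
  ballot_qsh 2 h g w = - qn 2 * ballot_qsh 1 h g w - ballot_qsh 0 h g w.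
Proof. by rewrite /ballot_qsh nweightSS qshDl !qshZl mulN1r. Qed.

Lemma ballot_qsh00 g w : ballot_qsh 0 0 g w = 0.
Proof. by rewrite /ballot_qsh ballot0 nweight_sword_nil newton_coef0 qshZl mul0r. Qed.

Lemma ballot_qsh10 g w : ballot_qsh 1 0 g w = g w.
Proof. by rewrite /ballot_qsh ballot0 nweight_sword_nil newton_coef1 qshZl mul1r qsh1l. Qed.

(* A family of series closed under left derivatives (the [_cons_] lemmas
   below) and vanishing at the empty word, hence identically zero.  The
   vanishing of [newton_defect_x] is the generating form of Newton's identity;
   the three other families are what its derivatives produce. *)
Definition ballot_defect_x (h : nat) (w : word) : F :=
  ballot_qsh 0 h altx w + (q ^+ h)^-1 * qn h * ballot_qsh 1 h altx w
  + (q ^+ h ^+ 2)^-1 * qn h * ballot_qsh 1 h.-1 alty w.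

Definition ballot_defect_y (h : nat) (w : word) : F :=
  ballot_qsh 0 h alty w - q^-1 * qn h * ballot_qsh 1 h.+1 altx w
  - (q ^+ h.+2)^-1 * qn h * ballot_qsh 1 h alty w.

Ltac qfield :=
  repeat match goal with |- context [ballot_qsh ?k ?h ?g ?w] =>
    let e := fresh "e" in set e := ballot_qsh k h g w end;
  rewrite ?qintE ?exprS ?expr0 ?expr1; field;
  by rewrite ?q_neq0 ?qsqr_sub1_neq0 ?expf_neq0 ?oner_neq0.

Lemma ballot_defect_x_cons_x h w :
  ballot_defect_x h (lx :: w) =
  qn h * ballot_defect_x h.+1 w + (q ^+ h ^+ 2)^-1 * ballot_defect_y h w.
Proof.
rewrite /ballot_defect_x /ballot_defect_y !ballot_qsh_altx_x !ballot_qsh_alty_x.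
by case: h => [|h] /=; [rewrite qint0 ?ballot_qsh00; ring | qfield].
Qed.

Lemma ballot_defect_x_cons_y h w :
  ballot_defect_x h (ly :: w) =
  - qn h ^+ 2 * (q ^+ h)^-1 * ballot_defect_x h.-1 w
  - qn h * qn h.-1 * (q ^+ h ^+ 2)^-1 * ballot_defect_y h.-2 w.
Proof.
rewrite /ballot_defect_x /ballot_defect_y !ballot_qsh_altx_y !ballot_qsh_alty_y.
rewrite !ballot_qshSS.
case: h => [|[|h]] /=; first by rewrite qint0; ring.
  by rewrite qint0 ?ballot_qsh00 ?ballot_qsh10; qfield.
by qfield.
Qed.

Lemma ballot_defect_y_cons_x h w :
  ballot_defect_y h (lx :: w) = qn h * ballot_defect_y h.+1 w.
Proof.
rewrite /ballot_defect_y !ballot_qsh_altx_x !ballot_qsh_alty_x.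
by case: h => [|h] /=; [rewrite qint0 ?ballot_qsh00; ring | qfield].
Qed.

Lemma ballot_defect_y_cons_y h w :
  ballot_defect_y h (ly :: w) =
  (q ^+ h ^+ 2 + q^-1 * qn h * qn h.+1) * ballot_defect_x h w
  + qn h ^+ 2 * (q ^+ h.+2)^-1 * ballot_defect_y h.-1 w.
Proof.
rewrite /ballot_defect_x /ballot_defect_y !ballot_qsh_altx_y !ballot_qsh_alty_y.
rewrite !ballot_qshSS.
by case: h => [|h] /=; [rewrite qint0 ?ballot_qsh00 ?ballot_qsh10 | ]; qfield.
Qed.

Definition xCy_qsh (g : series) : series := qsh (nweight 0 xCy_series) g.

Lemma xCy_qsh_x g w : xCy_qsh g (lx :: w) = ballot_qsh 0 1 g w + xCy_qsh (lder lx g) w.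
Proof. by rewrite /xCy_qsh qsh_cons twist_nweight twist_xCy_series. Qed.

Lemma xCy_qsh_y g w : xCy_qsh g (ly :: w) = xCy_qsh (lder ly g) w.
Proof.
rewrite /xCy_qsh qsh_cons lder_nweight_y twist_nweight twist_xCy_series.
by rewrite (_ : lder ly xCy_series = \0) // nweight0 qsh0l add0r.
Qed.

Definition newton_defect_x (w : word) : F := xCy_qsh altx w - yweight altx w.

Definition newton_defect_y (w : word) : F :=
  xCy_qsh alty w - yweight alty w
  - q^-1 * ballot_qsh 1 1 altx w - (q ^+ 2)^-1 * alty w.

Lemma yweight_alty_y w : yweight alty (ly :: w) = yweight altx w + altx w.
Proof. by have := congr1 (fun f => f w) (lder_yweight_y alty). Qed.

Lemma newton_defect_x_cons_x w :
  newton_defect_x (lx :: w) = newton_defect_y w + ballot_defect_x 1 w.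
Proof.
rewrite /newton_defect_x /newton_defect_y /ballot_defect_x xCy_qsh_x /=.
by rewrite ballot_qsh10 qint1; qfield.
Qed.

Lemma newton_defect_x_cons_y w : newton_defect_x (ly :: w) = 0.
Proof.
rewrite /newton_defect_x xCy_qsh_y lder_altx_y /xCy_qsh qsh0r.
by rewrite /yweight /= mulr0 subrr.
Qed.

Lemma newton_defect_y_cons_x w : newton_defect_y (lx :: w) = ballot_defect_y 1 w.
Proof.
rewrite /newton_defect_y /ballot_defect_y xCy_qsh_x lder_alty_x /xCy_qsh qsh0r.
rewrite addr0 ballot_qsh_altx_x qint1 (_ : yweight alty (lx :: w) = 0).
  by rewrite (_ : alty (lx :: w) = 0) //; qfield.
by rewrite /yweight /= mulr0.
Qed.

Lemma newton_defect_y_cons_y w : newton_defect_y (ly :: w) = newton_defect_x w.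
Proof.
rewrite /newton_defect_y /newton_defect_x xCy_qsh_y lder_alty_y yweight_alty_y.
rewrite ballot_qsh_altx_y ballot_qshSS ballot_qsh10 ballot_qsh00 qint1 /=.
by qfield.
Qed.

Lemma ballot_qsh_nil k h g :
  ballot_qsh k h g [::] = newton_coef k * (h == 0)%:R * g [::].
Proof. by []. Qed.

Lemma defects_eq0 w :
  [/\ newton_defect_x w = 0, newton_defect_y w = 0
    & forall h, ballot_defect_x h w = 0 /\ ballot_defect_y h w = 0].
Proof.
elim: w => [|[] w [Tx Ty Bxy]].
- rewrite /newton_defect_x /newton_defect_y /ballot_defect_x /ballot_defect_y.
  rewrite /xCy_qsh /nweight /yweight /=.
  by split=> [||[|h]]; rewrite ?ballot_qsh_nil /= ?newton_coef0 ?qint0; try split; ring.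
- rewrite newton_defect_x_cons_x newton_defect_y_cons_x Ty (Bxy 1%N).1 (Bxy 1%N).2.
  split=> [||h]; rewrite ?addr0 //.
  rewrite ballot_defect_x_cons_x ballot_defect_y_cons_x (Bxy h.+1).1 (Bxy h).2.
  by rewrite (Bxy h.+1).2; split; ring.
- rewrite newton_defect_x_cons_y newton_defect_y_cons_y Tx.
  split=> // h; rewrite ballot_defect_x_cons_y ballot_defect_y_cons_y.
  by rewrite (Bxy h.-1).1 (Bxy h.-2).2 (Bxy h).1 (Bxy h.-1).2; split; ring.
Qed.

Lemma xCy_qsh_altx w : xCy_qsh altx w = yweight altx w.
Proof. by case: (defects_eq0 w) => /eqP; rewrite subr_eq0 => /eqP. Qed.

(** * Homogeneous components and commutation *)

Definition ypart (N : nat) (f : series) : series := fun w => (ny w == N)%:R * f w.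

Lemma lder_ypart_x N f : lder lx (ypart N f) = ypart N (lder lx f).
Proof. by []. Qed.

Lemma lder_ypart0_y f : lder ly (ypart 0 f) = \0.
Proof. by apply: functional_extensionality => u; rewrite /lder /ypart /= mul0r. Qed.

Lemma lder_ypartS_y N f : lder ly (ypart N.+1 f) = ypart N (lder ly f).
Proof. by apply: functional_extensionality => u; rewrite /lder /ypart /ny /= add1n eqSS. Qed.

Lemma twist_ypart a N f : twist a (ypart N f) = ypart N (twist a f).
Proof. by apply: functional_extensionality => u; rewrite /twist /ypart mulrCA. Qed.

Lemma ypartZ N c f : ypart N (c \*o f) = c \*o ypart N f.
Proof. by apply: functional_extensionality => u; rewrite /ypart /= mulrCA. Qed.

Lemma ypart0 N : ypart N \0 = \0.
Proof. by apply: functional_extensionality => u; rewrite /ypart /= mulr0. Qed.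

Lemma ypart_cons_x N f w : ypart N f (lx :: w) = ypart N (lder lx f) w.
Proof. by []. Qed.

Lemma ypart0_cons_y f w : ypart 0 f (ly :: w) = 0.
Proof. by rewrite /ypart /= mul0r. Qed.

Lemma ypartS_cons_y N f w : ypart N.+1 f (ly :: w) = ypart N (lder ly f) w.
Proof. by rewrite -lder_ypartS_y. Qed.

Lemma ypartD N f g w : ypart N (f \+ g) w = ypart N f w + ypart N g w.
Proof. by rewrite /ypart /= mulrDr. Qed.

Lemma ypart_qsh N f g w :
  ypart N (qsh f g) w = \sum_(i < N.+1) qsh (ypart i f) (ypart (N - i) g) w.
Proof.
elim: w N f g => [|a w IH] N f g.
  rewrite big_ord_recl /= /ypart /= subn0 big1 ?addr0; last by move=> i _; rewrite !mul0r.
  by rewrite mul1r mulrCA.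
case: a.
  rewrite ypart_cons_x lder_qsh ypartD !IH -big_split.
  by apply: eq_bigr => i _; rewrite qsh_cons !lder_ypart_x twist_ypart.
case: N => [|N].
  rewrite ypart0_cons_y big_ord_recl big_ord0 addr0 subn0 qsh_cons lder_ypart0_y.
  by rewrite qsh0l add0r lder_ypart0_y qsh0r.
rewrite ypartS_cons_y lder_qsh ypartD !IH.
rewrite (eq_bigr (fun i : 'I_N.+2 => qsh (lder ly (ypart i f)) (ypart (N.+1 - i) g) w
   + qsh (twist ly (ypart i f)) (lder ly (ypart (N.+1 - i) g)) w)) // big_split.
congr (_ + _).
  rewrite [RHS]big_ord_recl /= lder_ypart0_y qsh0l add0r.
  by apply: eq_bigr => i _; rewrite /bump /= add1n lder_ypartS_y subSS.
rewrite [RHS]big_ord_recr /= subnn lder_ypart0_y qsh0r addr0.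
by apply: eq_bigr => i _; rewrite twist_ypart subSn ?lder_ypartS_y // -ltnS ltn_ord.
Qed.

Definition altx_part (k : nat) : series := ypart k altx.
Definition alty_part (k : nat) : series := ypart k alty.
Definition altx_part_pred (k : nat) : series := if k is k'.+1 then altx_part k' else \0.
Definition alty_part_pred (k : nat) : series := if k is k'.+1 then alty_part k' else \0.

Lemma lder_altx_part_x k : lder lx (altx_part k) = alty_part k.
Proof. by []. Qed.

Lemma lder_altx_part_y k : lder ly (altx_part k) = \0.
Proof. by case: k => [|k]; rewrite /altx_part ?lder_ypart0_y ?lder_ypartS_y ?ypart0. Qed.

Lemma lder_alty_part_x k : lder lx (alty_part k) = \0.
Proof. by rewrite /alty_part lder_ypart_x lder_alty_x ypart0. Qed.

Lemma lder_alty_part_y k : lder ly (alty_part k) = altx_part_pred k.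
Proof. by case: k => [|k]; rewrite /alty_part ?lder_ypart0_y ?lder_ypartS_y. Qed.

Lemma lder_altx_part_pred_x k : lder lx (altx_part_pred k) = alty_part_pred k.
Proof. by case: k. Qed.

Lemma lder_altx_part_pred_y k : lder ly (altx_part_pred k) = \0.
Proof. by case: k => [|k] //=; rewrite lder_altx_part_y. Qed.

Lemma twist_altx_part a k : twist a (altx_part k) = altx_part k.
Proof. by rewrite /altx_part twist_ypart twist_altx. Qed.

Lemma twist_altx_part_pred a k : twist a (altx_part_pred k) = altx_part_pred k.
Proof. by case: k => [|k] /=; rewrite ?twist0 ?twist_altx_part. Qed.

Lemma twist_alty_part_x k : twist lx (alty_part k) = (q ^+ 2)^-1 \*o alty_part k.
Proof. by rewrite /alty_part twist_ypart twist_alty_x ypartZ. Qed.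

Lemma twist_alty_part_y k : twist ly (alty_part k) = q ^+ 2 \*o alty_part k.
Proof. by rewrite /alty_part twist_ypart twist_alty_y ypartZ. Qed.

Lemma alty_part_nil k : alty_part k [::] = 0.
Proof. by rewrite /alty_part /ypart /= mulr0. Qed.

(* The commutation of the (xy)^k is proved together with three companion
   identities, which are what its left derivatives produce. *)
Lemma alt_parts_commute w k l :
  [/\ qsh (altx_part k) (altx_part l) w = qsh (altx_part l) (altx_part k) w,
      qsh (alty_part k) (alty_part l) w = qsh (alty_part l) (alty_part k) w,
      qsh (alty_part k) (altx_part l) w + qsh (altx_part k) (alty_part l) w
        = qsh (alty_part l) (altx_part k) w + qsh (altx_part l) (alty_part k) w &
      qsh (altx_part_pred k) (alty_part l) w + q ^+ 2 * qsh (alty_part k) (altx_part_pred l) w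
        = qsh (altx_part_pred l) (alty_part k) w
          + q ^+ 2 * qsh (alty_part l) (altx_part_pred k) w].
Proof.
elim: w k l => [|a w IH] k l.
  by split; rewrite /= ?alty_part_nil ?mulr0 ?mul0r // mulrC.
have xx k' l' : qsh (altx_part k') (altx_part l') w = qsh (altx_part l') (altx_part k') w.
  by case: (IH k' l').
have yy k' l' : qsh (alty_part k') (alty_part l') w = qsh (alty_part l') (alty_part k') w.
  by case: (IH k' l').
have px k' l' :
    qsh (altx_part_pred k') (altx_part l') w = qsh (altx_part l') (altx_part_pred k') w.
  by case: k' => [|k'] /=; [rewrite qsh0l qsh0r | apply: xx].
have pp k' l' :
    qsh (altx_part_pred k') (altx_part_pred l') w
    = qsh (altx_part_pred l') (altx_part_pred k') w.
  by case: k' => [|k']; case: l' => [|l'] /=; rewrite ?qsh0l ?qsh0r //; apply: xx.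
have py k' l' :
    qsh (alty_part_pred k') (alty_part l') w = qsh (alty_part l') (alty_part_pred k') w.
  by case: k' => [|k'] /=; [rewrite qsh0l qsh0r | apply: yy].
have q2K : q ^+ 2 * (q ^+ 2)^-1 = 1 by rewrite mulfV // expf_neq0.
case: a; rewrite !qsh_cons.
  rewrite !lder_altx_part_x !lder_alty_part_x !lder_altx_part_pred_x !twist_altx_part.
  rewrite !twist_altx_part_pred !twist_alty_part_x !qsh0l !qsh0r !qshZl !add0r !addr0.
  split; [by case: (IH k l) | by [] | by rewrite yy |].
  by rewrite !mulrA q2K !mul1r (py k l) (py l k) addrC.
rewrite !lder_altx_part_y !lder_alty_part_y !lder_altx_part_pred_y !twist_altx_part.
rewrite !twist_altx_part_pred !twist_alty_part_y !qsh0l !qsh0r !qshZl !add0r !addr0.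
split; [by [] | by case: (IH k l) | |].
  by rewrite (px k l) (px l k) addrC.
by rewrite (pp k l).
Qed.

Lemma altx_part_commute k l : qcommute (altx_part k) (altx_part l).
Proof. by move=> w; case: (alt_parts_commute w k l). Qed.

Definition xCy_part (N : nat) : series := ypart N xCy_series.

Lemma ypart_nweight0 N f : ypart N (nweight 0 f) = newton_coef N \*o ypart N f.
Proof.
apply: functional_extensionality => u; rewrite /ypart /nweight /= addn0.
by case: eqP => [->|_]; rewrite ?mul0r ?mulr0 // !mul1r.
Qed.

Lemma ypart_yweight N f : ypart N (yweight f) = N%:R \*o ypart N f.
Proof.
apply: functional_extensionality => u; rewrite /ypart /yweight /=.
by case: eqP => [->|_]; rewrite ?mul0r ?mulr0 // !mul1r.
Qed.

Lemma xCy_newton N w :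
  \sum_(i < N.+1) newton_coef i * qsh (xCy_part i) (altx_part (N - i)) w
  = N%:R * altx_part N w.
Proof.
rewrite /altx_part -[RHS]/((N%:R \*o ypart N altx) w) -ypart_yweight.
rewrite -(functional_extensionality _ _ xCy_qsh_altx) ypart_qsh /xCy_qsh.
by apply: eq_bigr => i _; rewrite ypart_nweight0 qshZl.
Qed.

Lemma altx_part0 : altx_part 0 = sword [::].
Proof.
apply: functional_extensionality => w; rewrite /altx_part /ypart /sword.
case: (w =P [::]) => [->|/eqP w_nil]; first by rewrite /= mulr1.
have [->|/alt_ny /= e] := eqVneq (altx w) 0; first by rewrite mulr0.
have size_w : (0 < size w)%N by rewrite lt0n size_eq0.
have ny_w : ny w != 0%N by have := size_word w; lia.
by rewrite (negbTE ny_w) mul0r.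
Qed.

Lemma xCy_part0 : xCy_part 0 = \0.
Proof.
apply: functional_extensionality => -[|[] u]; rewrite /xCy_part /ypart /= ?mulr0 //.
have [->|/ballot_ny e] := eqVneq (ballot 1 u) 0; first by rewrite mulr0.
by rewrite /ny /= -/(ny u) -e addn1 mul0r.
Qed.

(** * Catalan words *)

Lemma count_allwords n u : count_mem u (allwords n) = (size u == n).
Proof.
elim: n u => [|n IH] [|a u] //=; rewrite cats0 count_cat !count_map.
  by rewrite !(@eq_count _ _ pred0) ?count_pred0.
have count_cons b :
    count (preim (cons b) (pred1 (a :: u))) (allwords n) = ((b == a) * (size u == n))%N.
  rewrite -IH; case: (eqVneq b a) => [->|ba] /=.
    by rewrite mul1n; apply: eq_count => w /=; rewrite eqseq_cons eqxx.
  rewrite mul0n (@eq_count _ _ pred0) ?count_pred0 // => w /=.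
  by rewrite eqseq_cons (negbTE ba).
by rewrite !count_cons eqSS; case: a {count_cons}; case: (size u == n).
Qed.

Lemma sum_allwords_eq n u (G : word -> F) :
  \sum_(w <- allwords n | w == u) G w = if size u == n then G u else 0.
Proof.
rewrite (eq_bigr (fun=> G u)) => [|w /eqP -> //].
rewrite big_const_seq -/(count_mem u _) count_allwords.
by case: (size u == n); rewrite /= ?addr0.
Qed.

Lemma coef_Ccat n u :
  coef (Ccat q n) u =
  if (size u == 2 * n)%N && catalan u then \prod_(i < (2 * n).+1) qint q (1 + psum u i)
  else 0.
Proof.
rewrite /coef /Ccat big_map big_filter_cond /=.
case cat_u: (catalan u); last first.
  by rewrite andbF big1 // => w /andP [cat_w /eqP w_u]; move: cat_w; rewrite w_u cat_u.
rewrite andbT -(sum_allwords_eq _ _ (fun w => \prod_(i < (2 * n).+1) qint q (1 + psum w i))).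
apply: eq_bigl => w.
by case: eqP => [->|_]; rewrite ?andbT ?andbF.
Qed.

Lemma psum0 u : psum u 0 = 0.
Proof. by rewrite /psum take0 big_nil. Qed.

Lemma psumS c u i : psum (c :: u) i.+1 = lbar c + psum u i.
Proof. by rewrite /psum /= big_cons. Qed.

Lemma psum_size u : psum u (size u) = (nx u)%:Z - (ny u)%:Z.
Proof.
elim: u => [|c u IH]; first by rewrite psum0.
by rewrite psumS IH /nx /ny /lbar; case: c => /=; lia.
Qed.

Lemma catalan_size u : catalan u -> size u = (2 * ny u)%N.
Proof. by case/andP=> _; rewrite psum_size size_word; lia. Qed.

Lemma ballot_rcons_y h u :
  ballot h (rcons u ly) =
  (\prod_(i < (size u).+1) qint q (h%:Z + psum u i)) * (h%:Z + psum u (size u) == 1)%:R.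
Proof.
elim: u h => [|c u IH] h.
  rewrite /= big_ord_recl big_ord0 mulr1 psum0 addr0.
  by case: h => [|[|h]] /=; rewrite ?qint0 ?mul0r ?mulr0.
rewrite [ballot _ _]/= IH [in RHS]big_ord_recl psum0 addr0 [size (c :: u)]/= psumS.
case: h => [|h]; first by rewrite qint0 !mul0r.
rewrite mulrA; congr (_ * _ * _).
  apply: eq_bigr => i _; rewrite /= /bump /= add1n psumS; congr (qint q _).
  by case: c; rewrite /lbar /=; lia.
by case: c; rewrite /lbar /=; congr ((_ == _)%:R); lia.
Qed.

Lemma ballot_rcons_y_eq0 h u i :
  (i <= size u)%N -> h%:Z + psum u i <= 0 -> ballot h (rcons u ly) = 0.
Proof.
elim: u h i => [|c u IH] h i.
  rewrite leqn0 => /eqP ->; rewrite psum0 addr0 => h_le0.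
  by rewrite (_ : h = 0%N) /= ?qint0 ?mul0r //; lia.
case: h => [|h]; first by rewrite /= qint0 mul0r.
case: i => [|i]; first by rewrite psum0 addr0; lia.
rewrite ltnS psumS => i_le h_le0.
rewrite /= (IH _ i) ?mulr0 //.
by move: h_le0; case: c; rewrite /lbar /=; lia.
Qed.

Lemma ballot1_rcons_y u :
  ballot 1 (rcons u ly) =
  if catalan u then \prod_(i < (size u).+1) qint q (1 + psum u i) else 0.
Proof.
rewrite /catalan; case: forallP => [prefix_ge0|]; last first.
  move=> /forallP/forallPn [i]; rewrite negb_imply -ltNge => /andP [_ neg_i].
  by apply: (@ballot_rcons_y_eq0 _ _ i); [exact/ltnW | lia].
rewrite ballot_rcons_y /=.
have [->|end_ne0] := eqVneq (psum u (size u)) 0; first by rewrite addr0 !eqxx mulr1.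
by rewrite (_ : (1 + psum u (size u) == 1) = false) ?mulr0 //; apply/negbTE; lia.
Qed.

Lemma ballot_rcons_x h u : ballot h (rcons u lx) = 0.
Proof. by elim: u h => [|c u IH] h /=; rewrite ?IH mulr0. Qed.

Lemma coef_xCy n w : coef (xCy q n) w = xCy_part n.+1 w.
Proof.
have coef_xCyE : coef (xCy q n) w = \sum_(p <- Ccat q n | lx :: rcons p.2 ly == w) p.1.
  by rewrite /coef big_map; apply: eq_bigl => p; rewrite cats1.
rewrite {}coef_xCyE /xCy_part /ypart.
case: w => [|[] v]; rewrite /xCy_series ?mulr0; last 1 first.
- by rewrite big1 // => p; rewrite eqseq_cons.
- by rewrite big1.
case/lastP: v => [|v []].
- by rewrite mulr0 big1 // => -[c u]; rewrite eqseq_cons; case: u.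
- by rewrite ballot_rcons_x mulr0 big1 // => p; rewrite eqseq_cons eqseq_rcons andbF.
rewrite (eq_bigl (fun p => p.2 == v)) => [|p]; last first.
  by rewrite eqseq_cons eqseq_rcons !eqxx andbT.
rewrite -/(coef (Ccat q n) v) coef_Ccat ballot1_rcons_y.
rewrite (_ : ny (lx :: rcons v ly) = (ny v).+1); last first.
  by rewrite /ny /= -cats1 count_cat addn1.
case cat_v: (catalan v); rewrite ?andbF ?mulr0 // andbT catalan_size // eqSS eqn_pmul2l //.
by case: eqP => [->|_]; rewrite ?mul1r ?mul0r.
Qed.

Hypothesis q_not_root1 : forall k, (0 < k)%N -> q ^+ k != 1.

Lemma qint_neq0 N : (0 < N)%N -> qn N != 0.
Proof.
move=> N_gt0; rewrite qintE mulf_eq0 invr_eq0 negb_or qint_den_neq0 andbT subr_eq0.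
have NN_gt0 : (0 < N + N)%N by rewrite addn_gt0 N_gt0.
apply: contraNneq (q_not_root1 NN_gt0) => e.
by rewrite exprD {2}e mulfV // expf_neq0.
Qed.

Lemma newton_coef_neq0 N : (0 < N)%N -> newton_coef N != 0.
Proof. by move=> N_gt0; rewrite mulf_neq0 ?signr_eq0 ?qint_neq0. Qed.

(* Newton's identity solved for its top term. *)
Lemma xCy_part_rec N : (0 < N)%N ->
  xCy_part N = (newton_coef N)^-1 \*o (N%:R \*o altx_part N \+
    (fun w => \sum_(i < N) - newton_coef i * qsh (xCy_part i) (altx_part (N - i)) w)).
Proof.
move=> N_gt0; apply: functional_extensionality => w /=.
rewrite -(xCy_newton N w) big_ord_recr /= subnn altx_part0 qsh1r.
under [X in _ + X]eq_bigr do rewrite mulNr.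
by rewrite sumrN addrAC subrr add0r mulKf ?newton_coef_neq0.
Qed.

Lemma xCy_part_commute_altx N k : qcommute (altx_part k) (xCy_part N).
Proof.
elim/ltn_ind: N => -[_|N IH]; first by rewrite xCy_part0; apply: qcommute0.
rewrite xCy_part_rec //; apply/qcommuteZ/qcommuteD.
  exact/qcommuteZ/altx_part_commute.
by apply: qcommute_sum => i; apply: qcommute_qsh; [apply: IH | apply: altx_part_commute].
Qed.

Lemma xCy_part_commute N M : qcommute (xCy_part M) (xCy_part N).
Proof.
elim/ltn_ind: N => -[_|N IH]; first by rewrite xCy_part0; apply: qcommute0.
have altx_xCy k : qcommute (xCy_part M) (altx_part k).
  exact/qcommute_sym/xCy_part_commute_altx.
rewrite [xCy_part N.+1]xCy_part_rec //; apply/qcommuteZ/qcommuteD; first exact: qcommuteZ.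
by apply: qcommute_sum => i; apply: qcommute_qsh; [apply: IH | apply: altx_xCy].
Qed.

End QShuffleSeries.

Theorem corollary8p4 (F : fieldType) (q : F)
  (hchar : [pchar F] =i pred0)
  (hq0 : q != 0)
  (hq : forall k : nat, (0 < k)%N -> q ^+ k != 1)
  (n m : nat) :
  veq (qshuffle q (xCy q n) (xCy q m)) (qshuffle q (xCy q m) (xCy q n)).
Proof.
have q2_neq1 : q ^+ 2 != 1 by apply: hq.
have coef_xCyE k : coef (xCy q k) = xCy_part q k.+1.
  by apply: functional_extensionality => w; rewrite coef_xCy.
move=> w; rewrite !coef_qshuffle !coef_xCyE.
exact: (xCy_part_commute hq0 q2_neq1 hq).
Qed.
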